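(* Let $\mathbb{R}^d=V\oplus W$ with $\dim V=\ell$ and $\dim W=d-\ell$. Let $K\subseteq V$ and $L\subseteq W$ be convex bodies (in $V$ and $W$ respectively) that contain the origin, and let $\Lambda\subseteq V$ and $\Gamma\subseteq W$ be lattices. Then for every $i\in\{1,\dots,d\}$, $$\mu_i(K\oplus L,\Lambda\oplus\Gamma)=\max_{\substack{0\le j\le \ell\\ 0\le i-j\le d-\ell}}\Big(\mu_j(K,\Lambda)+\mu_{i-j}(L,\Gamma)\Big).$$
   Context: A convex body in a real vector space is a full-dimensional compact convex subset; a lattice is a full-rank discrete subgroup. The direct sum of $K\subseteq V$ and $L\subseteq W$ (both containing the origin) is $K\oplus L=\{\lambda x+(1-\lambda)y: x\in K,\ y\in L,\ \lambda\in[0,1]\}\subseteq\mathbb{R}^d$, and $\Lambda\oplus\Gamma=\{a+b: a\in\Lambda,\ b\in\Gamma\}$. For a $k$-dimensional real vector space $E$, a lattice $\Gamma'\subseteq E$, a convex body $C\subseteq E$ and $i\in\{1,\dots,k\}$, the $i$-th covering minimum is $\mu_i(C,\Gamma')=\min\{\mu\ge 0: (\mu C+\Gamma')\cap U\neq\emptyset$ for every affine subspace $U\subseteq E$ of dimension $k-i\}$; by convention $\mu_0(C,\Gamma')=0$. Covering minima of $K,\Lambda$ are taken in $V$, those of $L,\Gamma$ in $W$. *)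

From HB Require Import structures.
From mathcomp Require Import all_boot all_order all_algebra.
From mathcomp Require Import all_classical all_reals all_analysis.
Set Implicit Arguments. Unset Strict Implicit. Unset Printing Implicit Defensive.
Import Order.TTheory GRing.Theory Num.Theory.
Import numFieldNormedType.Exports.
Local Open Scope classical_set_scope.
Local Open Scope ring_scope.

(* Ambient space R^d = 'rV[R]_d.  A linear subspace E of R^d is represented by
   a matrix E : 'M_d through its row space (mxalgebra); its dimension is \rank E. *)

Section CoveringMinima.
Variables (R : realType) (d : nat).
Implicit Types (E : 'M[R]_d) (C G : set 'rV[R]_d).

Definition in_sub E (x : 'rV[R]_d) : Prop := (x <= E)%MS.

Definition convex_set C : Prop :=
  forall x y (t : R), C x -> C y -> 0 <= t <= 1 -> C (t *: x + (1 - t) *: y).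

(* C is a convex body in the subspace E: a compact convex subset of E which is
   full-dimensional in E (nonempty interior relative to E). *)
Definition convex_body_in E C : Prop :=
  [/\ C `<=` in_sub E, convex_set C, compact C &
      exists c, C c /\ \forall y \near c, in_sub E y -> C y].

Definition lattice_in E G : Prop :=
  [/\ G `<=` in_sub E, G 0, (forall x y, G x -> G y -> G (x - y)),
      (\forall y \near (0 : 'rV[R]_d), G y -> y = 0) &
      exists B : 'M[R]_d, (forall i, G (row i B)) /\ (E <= B)%MS].

(* (mu C + G) meets every affine subspace of E of dimension n, i.e. every
   a + U with a in E and U a linear subspace of E with dim U = n. *)
Definition covers E C G (mu : R) (n : nat) : Prop :=
  forall (a : 'rV[R]_d) (U : 'M[R]_d), in_sub E a -> (U <= E)%MS -> \rank U = n ->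
    exists c g, C c /\ G g /\ (mu *: c + g - a <= U)%MS.

(* i-th covering minimum of C w.r.t. G inside the (\rank E)-dimensional space E;
   mu_0 = 0 by convention. *)
Definition covering_minimum E C G (i : nat) : R :=
  if i == 0%N then 0
  else inf [set mu : R | 0 <= mu /\ covers E C G mu (\rank E - i)].

Definition set_dsum C D : set 'rV[R]_d :=
  [set z | exists x y (t : R), [/\ C x, D y, 0 <= t <= 1 & z = t *: x + (1 - t) *: y]].

Definition lattice_dsum G H : set 'rV[R]_d :=
  [set z | exists a b, [/\ G a, H b & z = a + b]].

End CoveringMinima.

From Pilot Require Import Defs.
From HB Require Import structures.
From mathcomp Require Import all_boot all_order all_algebra.
From mathcomp Require Import all_classical all_reals all_analysis.
From mathcomp Require Import lra zify.
Set Implicit Arguments. Unset Strict Implicit. Unset Printing Implicit Defensive.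
Import Order.TTheory GRing.Theory Num.Theory.
Import numFieldNormedType.Exports.
Local Open Scope classical_set_scope.
Local Open Scope ring_scope.

(* Write R^d = V + W and let P be the projection onto V along W.  Upper bound:
   an affine space a + U of codimension i is hit in two stages.  Its projection
   a P + U P, of codimension j := l - dim (U P) in V, is hit by al K + Lam, and
   the fibre through the point found, a translate of U :&: W of codimension
   i - j in W, is hit by be L + Gam; since K and L contain 0,
   al K + be L lies in (al + be) (K (+) L).  Lower bound: affine spaces
   a1 + U1 in V and a2 + U2 in W of codimensions j and i - j, missed by
   al K + Lam and be L + Gam, add up to an affine space of codimension i; a
   point mu (t k + (1 - t) y) + lam + gam on it splits componentwise, which
   forces al < mu t and be < mu (1 - t). *)

Section Subgroup.
Variables (M : zmodType) (G : set M).
Hypotheses (G0 : G 0) (GB : forall x y, G x -> G y -> G (x - y)).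

Lemma subgroupN x : G x -> G (- x).
Proof. by move=> Gx; have := GB G0 Gx; rewrite sub0r. Qed.

Lemma subgroupD x y : G x -> G y -> G (x + y).
Proof. by move=> Gx Gy; rewrite -[y]opprK; apply/GB/subgroupN. Qed.

Lemma subgroupMz x z : G x -> G (x *~ z).
Proof.
move=> Gx; have GMn n : G (x *+ n).
  by elim: n => [|n IHn]; [rewrite mulr0n | rewrite mulrS; apply: subgroupD].
by case: z => n; [exact: GMn | rewrite NegzE mulrNz; exact/subgroupN/GMn].
Qed.

Lemma subgroup_sum (I : Type) (r : seq I) (F : I -> M) :
  (forall i, G (F i)) -> G (\sum_(i <- r) F i).
Proof. by move=> GF; apply: (big_ind G) => // x y; apply: subgroupD. Qed.

End Subgroup.

Lemma exists_submx_rank (F : fieldType) (n : nat) (E : 'M[F]_n) r :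
  (r <= \rank E)%N -> exists2 U : 'M[F]_n, (U <= E)%MS & \rank U = r.
Proof.
move=> rE; have rn : (r <= n)%N := leq_trans rE (rank_leq_col E).
exists (pid_mx r *m row_base E).
  by rewrite (submx_trans (submxMl _ _)) // eq_row_base.
by rewrite mxrankMfree ?row_base_free // rank_pid_mx.
Qed.

Lemma sub_addsmx_disjoint (F : fieldType) (n : nat) (V W U1 U2 : 'M[F]_n)
    (p q : 'rV[F]_n) :
  (V :&: W = 0)%MS -> (U1 <= V)%MS -> (U2 <= W)%MS ->
  (p <= V)%MS -> (q <= W)%MS -> ((p + q)%R <= U1 + U2)%MS ->
  (p <= U1)%MS /\ (q <= U2)%MS.
Proof.
move=> VW0 U1V U2W pV qW /sub_addsmxP[[D1 D2]] /= e.
have pq0 : p - D1 *m U1 = 0.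
  apply/eqP; rewrite -submx0 -VW0 sub_capmx.
  rewrite addmx_sub ?eqmx_opp ?(submx_trans (submxMl _ _) U1V) //=.
  have -> : p - D1 *m U1 = D2 *m U2 - q.
    by apply/eqP; rewrite subr_eq addrAC [D2 *m U2 + _]addrC -e addrK.
  by rewrite addmx_sub ?eqmx_opp ?(submx_trans (submxMl _ _) U2W).
have ep : p = D1 *m U1 by apply/eqP; rewrite -subr_eq0 pq0.
split; first by rewrite ep submxMl.
have -> : q = D2 *m U2 by apply: (addrI p); rewrite e ep.
exact: submxMl.
Qed.

Lemma mxrank_proj_cap (F : fieldType) (n : nat) (V W U : 'M[F]_n) :
  (V :&: W = 0)%MS -> (1%:M <= V + W)%MS ->
  (\rank (U *m proj_mx V W) + \rank (U :&: W))%N = \rank U.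
Proof.
move=> VW0 VW1; set P := proj_mx V W.
have kerW : (kermx P :=: W)%MS.
  apply/eqmxP; rewrite andbC; apply/andP; split.
    by apply/sub_kermxP; apply: proj_mx_0.
  have := proj_mx_compl_sub (submx_trans (submx1 (kermx P)) VW1).
  by rewrite -/P (sub_kermxP (submx_refl _)) subr0.
rewrite -(mxrank_mul_ker U P); congr (_ + _)%N.
by apply/eqmx_rank/eqmxP; apply: cap_eqmx (eqmx_refl U) (eqmx_sym kerW).
Qed.

Section CoveringMinimum.
Variables (R : realType) (d : nat).
Implicit Types (E U : 'M[R]_d) (C G : set 'rV[R]_d) (a : 'rV[R]_d).

Lemma convex0_shrink C k (s t : R) :
  Defs.convex_set C -> C 0 -> C k -> 0 <= s <= t -> exists2 c, C c & t *: c = s *: k.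
Proof.
move=> cC C0 Ck /andP[s0 st].
have [t0|t0] := eqVneq t 0.
  have -> : s = 0 by apply/le_anti; rewrite s0 -t0 st.
  by exists 0; rewrite ?t0 ?scale0r.
have t_gt0 : 0 < t by rewrite lt_neqAle eq_sym t0 (le_trans s0 st).
exists ((s / t) *: k + (1 - s / t) *: 0).
  apply: (cC k 0 (s / t)) => //.
  by rewrite divr_ge0 ?(ltW t_gt0) //= ler_pdivrMr // mul1r.
by rewrite scaler0 addr0 scalerA mulrCA divff // mulr1.
Qed.

Lemma covers_mono E C G (mu nu : R) n :
  Defs.convex_set C -> C 0 -> 0 <= mu <= nu -> covers E C G mu n -> covers E C G nu n.
Proof.
move=> cC C0 munu cov a U aE UE rU.
have [c [g [Cc [Gg hit]]]] := cov a U aE UE rU.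
have [c' Cc' e] := convex0_shrink cC C0 Cc munu.
by exists c', g; rewrite e.
Qed.

Lemma covers_rank E C G (mu : R) : C 0 -> G 0 -> covers E C G mu (\rank E).
Proof.
move=> C0 G0 a U aE UE rU; exists 0, 0; do 2!split=> //.
have EU : (E <= U)%MS by rewrite -(mxrank_leqif_sup UE).2 rU.
by rewrite scaler0 add0r sub0r eqmx_opp (submx_trans aE EU).
Qed.

Lemma lattice_round E G : lattice_in E G ->
  exists2 r : R, 0 <= r & forall v, (v <= E)%MS ->
    exists g, [/\ G g, (v - g <= E)%MS & `|v - g| <= r].
Proof.
case=> GE G0 GB _ [B [GBi EB]].
exists (\sum_i `|row i B|); first by rewrite sumr_ge0.
move=> v vE; have [D eD] := submxP (submx_trans vE EB).
pose g := \sum_i (Num.floor (D 0 i))%:~R *: row i B.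
have Gg : G g by apply: subgroup_sum => // i; rewrite scaler_int; apply: subgroupMz.
exists g; split => //; first by rewrite addmx_sub ?eqmx_opp // GE.
have -> : v - g = \sum_i (D 0 i - (Num.floor (D 0 i))%:~R) *: row i B.
  by rewrite eD mulmx_sum_row -sumrB; apply: eq_bigr => i _; rewrite scalerBl.
apply: le_trans (ler_norm_sum _ _ _) _; apply: ler_sum => i _.
rewrite normrZ ger0_norm ?subr_ge0 ?floor_le // ler_piMl //.
by rewrite lerBlDr addrC ltW // -[1]/(1%:~R) -intrD floorD1_gt.
Qed.

Lemma covers_exists E C G : convex_body_in E C -> lattice_in E G ->
  exists2 mu : R, 0 <= mu & forall n, covers E C G mu n.
Proof.
case=> CE _ _ [c0 [Cc0 /nbhs_ballP[r0 r0_gt0 ballC]]] /lattice_round[r r_ge0 round].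
have c0E : (c0 <= E)%MS by apply: CE.
pose mu := (r + 1) / r0.
have mu_gt0 : 0 < mu by rewrite divr_gt0 // ltr_wpDl.
exists mu => [|n a U aE _ _]; first exact: ltW.
have vE : (a - mu *: c0 <= E)%MS by rewrite addmx_sub ?eqmx_opp ?scalemx_sub.
have [g [Gg wE wr]] := round _ vE; set w := a - mu *: c0 - g in wE wr.
exists (c0 + mu^-1 *: w), g; split.
  apply: ballC; last by rewrite /in_sub addmx_sub ?scalemx_sub.
  rewrite -ball_normE /= opprD addrA subrr add0r normrN normrZ.
  rewrite ger0_norm ?invr_ge0 ?ltW // mulrC ltr_pdivrMr // /mu mulrCA.
  by rewrite divff ?gt_eqF // mulr1; lra.
split=> //; rewrite scalerDr scalerA mulfV ?gt_eqF // scale1r /w.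
by rewrite addrA subrKC subrK subrr sub0mx.
Qed.

Lemma covering_minimum_ge0 E C G j :
  convex_body_in E C -> lattice_in E G -> 0 <= covering_minimum E C G j.
Proof.
move=> EC EG; rewrite /covering_minimum; case: eqP => // _.
have [mu mu_ge0 cov] := covers_exists EC EG.
by apply: lb_le_inf => [|nu []]; first by exists mu.
Qed.

Lemma covers_gt_covering_minimum E C G j (mu : R) :
  convex_body_in E C -> C 0 -> lattice_in E G ->
  covering_minimum E C G j < mu -> covers E C G mu (\rank E - j).
Proof.
move=> EC C0 EG; rewrite /covering_minimum; case: eqP => [->|_] lt_mu.
  by rewrite subn0; apply: covers_rank => //; case: EG.
have [mu0 mu0_ge0 cov] := covers_exists EC EG.
have [nu [nu_ge0 cov_nu] lt_nu] :=
  inf_lt (ex_intro _ mu0 (conj mu0_ge0 (cov _))) lt_mu.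
case: EC => _ cC _ _; apply: covers_mono cC C0 _ cov_nu.
by rewrite nu_ge0 ltW.
Qed.

Lemma covering_minimum_gt_misses E C G j (al : R) :
  convex_body_in E C -> C 0 -> al < covering_minimum E C G j ->
  exists a U, [/\ (a <= E)%MS, (U <= E)%MS, \rank U = (\rank E - j)%N &
    forall (s : R) c g, 0 <= s -> C c -> G g -> (s *: c + g - a <= U)%MS -> al < s].
Proof.
move=> [_ cC _ _] C0 lt_al; have [al_lt0|al_ge0] := ltP al 0.
  have [U UE rU] := exists_submx_rank (leq_subr j (\rank E)).
  exists 0, U; split=> // [|s c g s_ge0 _ _ _]; first exact: sub0mx.
  exact: lt_le_trans s_ge0.
move: lt_al; rewrite /covering_minimum; case: eqP => [_|_ lt_al].
  by rewrite ltNge al_ge0.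
have not_cov : ~ covers E C G al (\rank E - j).
  move=> cov; move: lt_al; rewrite ltNge => /negP; apply.
  by apply: ge_inf; [exists 0 => mu [] | ].
apply: contrapT => no_miss; apply: not_cov => a U aE UE rU.
apply: contrapT => miss; apply: no_miss; exists a, U; split=> // s c g s_ge0 Cc Gg hit.
rewrite ltNge; apply/negP => s_le.
have [c' Cc' e] : exists2 c', C c' & al *: c' = s *: c.
  by apply: convex0_shrink; rewrite ?s_ge0.
by apply: miss; exists c', g; rewrite e.
Qed.

End CoveringMinimum.

Section DirectSum.
Variables (R : realType) (d l : nat) (V W : 'M[R]_d) (K L Lam Gam : set 'rV[R]_d).
Hypotheses (rV : \rank V = l) (rW : \rank W = (d - l)%N).
Hypothesis VW0 : (V :&: W = 0)%MS.
Hypotheses (HK : convex_body_in V K) (K0 : K 0) (HL : convex_body_in W L) (L0 : L 0).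
Hypotheses (HLam : lattice_in V Lam) (HGam : lattice_in W Gam).

Local Notation KL := (set_dsum K L).
Local Notation LamGam := (lattice_dsum Lam Gam).

Lemma covers_dsum_split (mu : R) a1 a2 (U1 U2 : 'M[R]_d) :
  (a1 <= V)%MS -> (U1 <= V)%MS -> (a2 <= W)%MS -> (U2 <= W)%MS ->
  covers 1%:M KL LamGam mu (\rank U1 + \rank U2) ->
  exists t k y lam gam, [/\ 0 <= t <= 1, K k, L y, Lam lam & Gam gam] /\
    ((mu * t) *: k + lam - a1 <= U1)%MS /\ ((mu * (1 - t)) *: y + gam - a2 <= U2)%MS.
Proof.
move=> a1V U1V a2W U2W cov.
have [KV _ _ _] := HK; have [LW _ _ _] := HL.
have [LamV _ _ _ _] := HLam; have [GamW _ _ _ _] := HGam.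
have U12 : (U1 :&: U2 = 0)%MS by apply/eqP; rewrite -submx0 -VW0 capmxS.
have [c [g [[k [y [t [Kk Ly t01 ->]]]] [[lam [gam [Llam Ggam ->]]] hit]]]] :=
  cov (a1 + a2) (U1 + U2)%MS (submx1 _) (submx1 _) (mxrank_disjoint_sum U12).
exists t, k, y, lam, gam; split=> //; apply: sub_addsmx_disjoint VW0 U1V U2W _ _ _.
- by rewrite !addmx_sub ?eqmx_opp ?scalemx_sub ?(KV k) ?(LamV lam).
- by rewrite !addmx_sub ?eqmx_opp ?scalemx_sub ?(LW y) ?(GamW gam).
by rewrite addrACA -opprD addrACA -!scalerA -scalerDr.
Qed.

Lemma covers_dsum_ge (mu : R) i j :
  0 <= mu -> (j <= l)%N -> (j <= i <= d)%N -> (i - j <= d - l)%N ->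
  covers 1%:M KL LamGam mu (d - i) ->
  covering_minimum V K Lam j + covering_minimum W L Gam (i - j) <= mu.
Proof.
move=> mu_ge0 jl /andP[ji le_id] ijl cov.
have ld : (l <= d)%N by rewrite -rV rank_leq_col.
set a := covering_minimum V K Lam j; set b := covering_minimum W L Gam (i - j).
rewrite leNgt; apply/negP => lt_mu; pose e := (a + b - mu) / 2.
have e_gt0 : 0 < e by rewrite /e; lra.
have [lt_a lt_b] : a - e < a /\ b - e < b by rewrite !gtrBl.
have [a1 [U1 [a1V U1V rU1 miss1]]] :=
  covering_minimum_gt_misses (G := Lam) HK K0 lt_a.
have [a2 [U2 [a2W U2W rU2 miss2]]] :=
  covering_minimum_gt_misses (G := Gam) HL L0 lt_b.
have rU12 : (\rank U1 + \rank U2)%N = (d - i)%N by rewrite rU1 rU2 rV rW; lia.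
rewrite -rU12 in cov.
have [t [k [y [lam [gam [[/andP[t_ge0 t_le1] Kk Ly Llam Ggam] [hitV hitW]]]]]]] :=
  covers_dsum_split a1V U1V a2W U2W cov.
have t'_ge0 : 0 <= 1 - t by rewrite subr_ge0.
have := miss1 _ _ _ (mulr_ge0 mu_ge0 t_ge0) Kk Llam hitV.
have := miss2 _ _ _ (mulr_ge0 mu_ge0 t'_ge0) Ly Ggam hitW.
by rewrite /e mulrBr mulr1; lra.
Qed.

Hypothesis VW1 : (1%:M <= V + W)%MS.

Lemma covers_dsum (mu : R) i : (i <= d)%N ->
  (forall j, (j <= l)%N -> (j <= i)%N -> (i - j <= d - l)%N ->
     covering_minimum V K Lam j + covering_minimum W L Gam (i - j) < mu) ->
  covers 1%:M KL LamGam mu (d - i).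
Proof.
move=> le_id sum_lt a U _ _ rU; set P := proj_mx V W.
have rUPW := mxrank_proj_cap U VW0 VW1; rewrite -/P rU in rUPW.
have rUP : (\rank (U *m P) <= l)%N by rewrite -rV mxrankS ?proj_mx_sub.
have rUW : (\rank (U :&: W) <= d - l)%N by rewrite -rW mxrankS ?capmxSr.
have ld : (l <= d)%N by rewrite -rV rank_leq_col.
set r1 := \rank (U *m P) in rUPW rUP *; set r2 := \rank (U :&: W) in rUPW rUW *.
pose j := (l - r1)%N.
have [ji ijl] : (j <= i)%N /\ (i - j <= d - l)%N by rewrite /j; split; lia.
have rUP_j : \rank (U *m P) = (\rank V - j)%N by rewrite rV /j; lia.
have rUW_j : \rank (U :&: W) = (\rank W - (i - j))%N by rewrite rW /j; lia.
have := sum_lt j (leq_subr _ _) ji ijl.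
set aj := covering_minimum V K Lam j; set bj := covering_minimum W L Gam (i - j).
move=> lt_mu.
have aj_ge0 : 0 <= aj by apply: covering_minimum_ge0.
have bj_ge0 : 0 <= bj by apply: covering_minimum_ge0.
pose al := aj + (mu - aj - bj) / 2; pose be := mu - al.
have [lt_al lt_be mu_gt0] : [/\ aj < al, bj < be & 0 < mu].
  by rewrite /be /al; split; lra.
have [k [lam [Kk [Llam hitV]]]] :=
  covers_gt_covering_minimum HK K0 HLam lt_al
    (proj_mx_sub V W a) (proj_mx_sub _ _ U) rUP_j.
have [D eD] := submxP hitV; pose u := D *m U; pose x := a + u.
have xP : x *m P = al *: k + lam by rewrite mulmxDl -mulmxA -eD addrC subrK.
have [y [gam [Ly [Ggam hitW]]]] :=
  covers_gt_covering_minimum HL L0 HGam lt_be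
    (proj_mx_compl_sub (submx_trans (submx1 x) VW1)) (capmxSr U W) rUW_j.
exists ((al / mu) *: k + (1 - al / mu) *: y), (lam + gam); split.
  exists k, y, (al / mu); split => //.
  by rewrite divr_ge0 ?ler_pdivrMr ?mul1r /=; rewrite /al; lra.
split; first by exists lam, gam.
rewrite scalerDr !scalerA mulrBr mulr1 mulrCA divff ?gt_eqF // mulr1 -/be.
rewrite addrACA -xP.
have -> : x *m P + (be *: y + gam) - a = u + (be *: y + gam - (x - x *m P)).
  move: (x *m P) (be *: y + gam) => p q; rewrite /x.
  by rewrite opprB (addrC a) opprD !addrA (addrC u q) (addrAC q u p) addrK (addrC q).
by rewrite addmx_sub ?submxMl // (submx_trans hitW) ?capmxSl.
Qed.

End DirectSum.

Unset Implicit Arguments.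

Theorem theorem1p2 (R : realType) (d l : nat) (V W : 'M[R]_d)
    (K L Lam Gam : set 'rV[R]_d) :
  \rank V = l -> \rank W = (d - l)%N ->
  (V :&: W == (0 : 'M[R]_d))%MS -> (V + W == (1%:M : 'M[R]_d))%MS ->
  convex_body_in V K -> K 0 -> convex_body_in W L -> L 0 ->
  lattice_in V Lam -> lattice_in W Gam ->
  forall i : nat, (1 <= i <= d)%N ->
    covering_minimum (1%:M : 'M[R]_d) (set_dsum K L) (lattice_dsum Lam Gam) i =
    \big[Num.max/0]_(j < l.+1 | (j <= i)%N && (i - j <= d - l)%N)
       (covering_minimum V K Lam j + covering_minimum W L Gam (i - j)).
Proof.
move=> rV rW /andP[VW0 _] /andP[_ VW1] HK K0 HL L0 HLam HGam i /andP[i_gt0 le_id].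
have {VW0}VW0 : (V :&: W = 0)%MS by apply/eqP; rewrite -submx0.
set M := \big[Num.max/0]_(j < l.+1 | _) _.
set T := [set mu | 0 <= mu /\
  covers 1%:M (set_dsum K L) (lattice_dsum Lam Gam) mu (d - i)].
have -> : covering_minimum 1%:M (set_dsum K L) (lattice_dsum Lam Gam) i = inf T.
  by rewrite /covering_minimum mxrank1 gtn_eqF.
have M_ge0 : 0 <= M by apply: bigmax_ge_id.
have T_gt e : 0 < e -> T (M + e).
  move=> e_gt0; split; first exact: addr_ge0 M_ge0 (ltW e_gt0).
  apply: (covers_dsum rV rW VW0 HK K0 HL L0 HLam HGam VW1 le_id) => j jl ji ijl.
  apply: (@le_lt_trans _ _ M); last by rewrite ltrDl.
  by rewrite /M (bigD1 (Ordinal (jl : (j < l.+1)%N))) ?ji ?ijl //= le_max lexx.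
have M_lb : lbound T M.
  move=> mu [mu_ge0 cov]; apply: bigmax_le => // j /andP[ji ijl].
  have jl : (j <= l)%N by rewrite -ltnS ltn_ord.
  apply: (covers_dsum_ge rV rW VW0 HK K0 HL L0 HLam HGam mu_ge0 jl _ ijl cov).
  by rewrite ji.
apply/le_anti/andP; split.
  apply/ler_addgt0Pr => e e_gt0; apply: ge_inf (T_gt e e_gt0).
  by exists 0 => mu [].
by apply: lb_le_inf M_lb; exists (M + 1); apply: T_gt.
Qed.
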